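(* Let $(f,\bar f)\colon (G,P_G)\to(H,P_H)$ be a regular epimorphism in $\mathsf{PreOrdGrp}$ (i.e. both $f$ and $\bar f$ surjective). The following conditions are equivalent: (1) (a) $\mathsf{Ker}(f)\subseteq Z(G)$, and (b) $\bar f\colon P_G\to P_H$ is a special homogeneous surjection in the category $\mathsf{Mon}$ of monoids; (2) $(f,\bar f)$ is a $\Gamma$-normal extension; (3) $(f,\bar f)$ is a $\Gamma$-central extension.
   Context: A preordered group is a pair $(G,P_G)$ where $G$ is a group (written additively, not necessarily abelian) and $P_G\subseteq G$ is a submonoid closed under conjugation in $G$. A morphism $(f,\bar f)\colon (G,P_G)\to(H,P_H)$ is a group homomorphism $f$ with $f(P_G)\subseteq P_H$, $\bar f$ its restriction to positive cones; this gives the category $\mathsf{PreOrdGrp}$. Limits are computed componentwise; regular (= normal = effective descent) epimorphisms are the morphisms with $f$ and $\bar f$ both surjective. Let $\mathsf{Mono(Ab)}$ denote the full subcategory of preordered groups $(G,P_G)$ with $G$ abelian and $P_G$ a subgroup. The inclusion $U\colon\mathsf{Mono(Ab)}\to\mathsf{PreOrdGrp}$ has a left adjoint $F$ with $F(G,P_G)=(G/[G,G],\ \{x-y : x,y\in\eta_G(P_G)\})$, where $\eta_G\colon G\to G/[G,G]$ is the abelianization quotient (the second component is the group completion of the monoid $\eta_G(P_G)$), and unit component $(G,P_G)\to UF(G,P_G)$ given by $\eta_G$. The Galois structure $\Gamma$ uses as extensions the regular epimorphisms. A regular epimorphism $(f,\bar f)\colon X\to Y$ is a $\Gamma$-trivial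 extension if the square formed by $(f,\bar f)$, the unit components $X\to UF(X)$, $Y\to UF(Y)$ and $UF(f,\bar f)$ is a pullback in $\mathsf{PreOrdGrp}$; it is a $\Gamma$-central extension if there is a regular epimorphism $p\colon E\to Y$ such that the pullback of $(f,\bar f)$ along $p$ is a $\Gamma$-trivial extension; it is a $\Gamma$-normal extension if the first projection of its kernel pair is a $\Gamma$-trivial extension. A split epimorphism of monoids $f\colon X\to Y$ with section $s$ and kernel $K=f^{-1}(0)$ is homogeneous if for every $y\in Y$ the maps $K\to f^{-1}(y)$, $x\mapsto x+s(y)$ and $x\mapsto s(y)+x$, are bijections. A surjective monoid homomorphism $f\colon X\to Y$ is a special homogeneous surjection if the first projection $\pi_1\colon Eq(f)\to X$ of its kernel pair $Eq(f)=\{(x,x')\in X\times X : f(x)=f(x')\}$, with section the diagonal $x\mapsto(x,x)$, is a homogeneous split epimorphism. *)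

From Stdlib Require Import ClassicalEpsilon ProofIrrelevance.

Set Implicit Arguments.
Unset Strict Implicit.

Record pgrp := PGrp {
  pcar :> Type;
  padd : pcar -> pcar -> pcar;
  popp : pcar -> pcar;
  pzero : pcar;
  ppos : pcar -> Prop
}.
Arguments padd {p} _ _.
Arguments popp {p} _.
Arguments pzero {p}.
Arguments ppos {p} _.

Record is_pgrp (G : pgrp) : Prop := {
  ax_assoc : forall x y z : G, padd x (padd y z) = padd (padd x y) z;
  ax_add0l : forall x : G, padd pzero x = x;
  ax_add0r : forall x : G, padd x pzero = x;
  ax_addNl : forall x : G, padd (popp x) x = pzero;
  ax_addNr : forall x : G, padd x (popp x) = pzero;
  ax_pos0 : ppos (@pzero G);
  ax_posD : forall x y : G, ppos x -> ppos y -> ppos (padd x y);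
  ax_posJ : forall g x : G, ppos x -> ppos (padd (padd g x) (popp g))
}.

Record phom (G H : pgrp) := PHom {
  pfun :> G -> H;
  hom_add : forall x y, pfun (padd x y) = padd (pfun x) (pfun y);
  hom_opp : forall x, pfun (popp x) = popp (pfun x);
  hom_zero : pfun pzero = pzero;
  hom_pos : forall x, ppos x -> ppos (pfun x)
}.

Definition regular_epi (G H : pgrp) (f : phom G H) : Prop :=
  (forall y : H, exists x : G, f x = y) /\
  (forall y : H, ppos y -> exists x : G, ppos x /\ f x = y).

(* A commutative square
        A --a--> C
        |        |
        b        d
        v        v
        B --c--> D
   is a pullback in PreOrdGrp (universal property). *)
Definition is_pullback (A B C D : pgrp) (a : A -> C) (b : A -> B)
    (c : B -> D) (d : C -> D) : Prop :=
  (forall x : A, c (b x) = d (a x)) /\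
  forall (Z : pgrp), is_pgrp Z ->
  forall (u : phom Z B) (v : phom Z C), (forall z, c (u z) = d (v z)) ->
  exists w : phom Z A,
    (forall z, b (w z) = u z /\ a (w z) = v z) /\
    (forall w' : phom Z A, (forall z, b (w' z) = u z /\ a (w' z) = v z) ->
       forall z, w' z = w z).

Section Abelianization.
Variable G : pgrp.

Inductive comm_sub : G -> Prop :=
  | cs_zero : comm_sub pzero
  | cs_comm : forall x y : G,
      comm_sub (padd (padd (padd x y) (popp x)) (popp y))
  | cs_add : forall a b, comm_sub a -> comm_sub b -> comm_sub (padd a b)
  | cs_opp : forall a, comm_sub a -> comm_sub (popp a).

Definition abcls (g : G) : G -> Prop := fun x => comm_sub (padd g (popp x)).

Definition abT : Type := {S : G -> Prop | exists g, S = abcls g}.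

Definition ab_eta (g : G) : abT := exist _ (abcls g) (ex_intro _ g eq_refl).

Definition ab_rep (c : abT) : G :=
  proj1_sig (constructive_indefinite_description _ (proj2_sig c)).

Definition ab_add (c d : abT) : abT := ab_eta (padd (ab_rep c) (ab_rep d)).
Definition ab_opp (c : abT) : abT := ab_eta (popp (ab_rep c)).
Definition ab_zero : abT := ab_eta pzero.

(* positive cone of F(G,P_G): the group completion {x - y : x,y in eta(P_G)} *)
Definition ab_pos (c : abT) : Prop :=
  exists x y : G, ppos x /\ ppos y /\ c = ab_add (ab_eta x) (ab_opp (ab_eta y)).

Definition UF : pgrp := PGrp ab_add ab_opp ab_zero ab_pos.

End Abelianization.

Definition UF_map (G H : pgrp) (f : G -> H) : UF G -> UF H :=
  fun c => ab_eta (f (ab_rep c)).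

Definition trivial_ext (X Y : pgrp) (f : phom X Y) : Prop :=
  regular_epi f /\
  is_pullback (A := X) (B := Y) (C := UF X) (D := UF Y)
    (@ab_eta X) f (@ab_eta Y) (UF_map f).

Section PB.
Variables (E X Y : pgrp) (p : phom E Y) (f : phom X Y).

Definition pbT : Type := {q : E * X | p (fst q) = f (snd q)}.

Definition pb_add (q r : pbT) : pbT.
Proof.
  refine (exist _ (padd (fst (proj1_sig q)) (fst (proj1_sig r)),
                   padd (snd (proj1_sig q)) (snd (proj1_sig r))) _).
  simpl. rewrite (hom_add p), (hom_add f), (proj2_sig q), (proj2_sig r).
  reflexivity.
Defined.

Definition pb_opp (q : pbT) : pbT.
Proof.
  refine (exist _ (popp (fst (proj1_sig q)), popp (snd (proj1_sig q))) _).
  simpl. rewrite (hom_opp p), (hom_opp f), (proj2_sig q). reflexivity.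
Defined.

Definition pb_zero : pbT.
Proof.
  refine (exist _ (pzero, pzero) _). simpl.
  rewrite (hom_zero p), (hom_zero f). reflexivity.
Defined.

Definition pb_pos (q : pbT) : Prop :=
  ppos (fst (proj1_sig q)) /\ ppos (snd (proj1_sig q)).

Definition PB : pgrp := PGrp pb_add pb_opp pb_zero pb_pos.

(* the projection E x_Y X -> E : the pullback of f along p *)
Definition pb_proj1 : phom PB E.
Proof.
  refine (@PHom PB E (fun q => fst (proj1_sig q)) _ _ _ _);
    try reflexivity.
  intros q [Hq _]; exact Hq.
Defined.

End PB.

Definition kernel_pair (X Y : pgrp) (f : phom X Y) : pgrp := PB f f.
Definition kp_proj1 (X Y : pgrp) (f : phom X Y) : phom (kernel_pair f) X :=
  pb_proj1 f f.

Definition central_ext (X Y : pgrp) (f : phom X Y) : Prop :=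
  regular_epi f /\
  exists (E : pgrp) (p : phom E Y),
    is_pgrp E /\ regular_epi p /\ trivial_ext (pb_proj1 p f).

Definition normal_ext (X Y : pgrp) (f : phom X Y) : Prop :=
  regular_epi f /\ trivial_ext (kp_proj1 f).

Record mon := Mon { mcar :> Type; mop : mcar -> mcar -> mcar; munit : mcar }.
Arguments mop {m} _ _.
Arguments munit {m}.

Record mhom (M N : mon) := MHom {
  mfun :> M -> N;
  mhom_op : forall x y, mfun (mop x y) = mop (mfun x) (mfun y);
  mhom_unit : mfun munit = munit
}.

Definition set_bij (T : Type) (A B : T -> Prop) (g : T -> T) : Prop :=
  (forall a, A a -> B (g a)) /\
  (forall a a', A a -> A a' -> g a = g a' -> a = a') /\
  (forall b, B b -> exists a, A a /\ g a = b).

Definition homogeneous_split_epi (X Y : mon) (f : mhom X Y) (s : mhom Y X)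
  : Prop :=
  (forall y, f (s y) = y) /\
  forall y : Y,
    set_bij (fun x => f x = munit) (fun x => f x = y) (fun x => mop x (s y)) /\
    set_bij (fun x => f x = munit) (fun x => f x = y) (fun x => mop (s y) x).

Section KerPairMon.
Variables (X Y : mon) (f : mhom X Y).

Definition eqmT : Type := {q : X * X | f (fst q) = f (snd q)}.

Definition eqm_op (q r : eqmT) : eqmT.
Proof.
  refine (exist _ (mop (fst (proj1_sig q)) (fst (proj1_sig r)),
                   mop (snd (proj1_sig q)) (snd (proj1_sig r))) _).
  simpl. rewrite !(mhom_op f), (proj2_sig q), (proj2_sig r). reflexivity.
Defined.

Definition eqm_unit : eqmT := exist _ (munit, munit) eq_refl.

Definition EqM : mon := Mon eqm_op eqm_unit.

Definition eqm_pi1 : mhom EqM X.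
Proof. refine (@MHom EqM X (fun q => fst (proj1_sig q)) _ _); reflexivity. Defined.

Definition eqm_diag : mhom X EqM.
Proof.
  refine (@MHom X EqM (fun x => exist _ (x, x) eq_refl) _ _).
  - intros x y. simpl. unfold eqm_op. simpl. f_equal. apply proof_irrelevance.
  - simpl. unfold eqm_unit. reflexivity.
Defined.

End KerPairMon.

Definition special_homogeneous_surjection (X Y : mon) (f : mhom X Y) : Prop :=
  (forall y : Y, exists x : X, f x = y) /\
  homogeneous_split_epi (eqm_pi1 f) (eqm_diag f).

(* The positive cone P_G as a monoid, and the restriction f-bar. *)
Definition cone (G : pgrp) (HG : is_pgrp G) : mon :=
  @Mon {x : G | ppos x}
    (fun a b => exist _ (padd (proj1_sig a) (proj1_sig b))
                  (ax_posD HG (proj2_sig a) (proj2_sig b)))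
    (exist _ pzero (ax_pos0 HG)).

Definition cone_hom (G H : pgrp) (HG : is_pgrp G) (HH : is_pgrp H)
  (f : phom G H) : mhom (cone HG) (cone HH).
Proof.
  refine (@MHom (cone HG) (cone HH)
            (fun a => exist _ (f (proj1_sig a)) (hom_pos f (proj2_sig a))) _ _).
  - intros [x hx] [y hy]; simpl.
    apply eq_sig_hprop; [intros; apply proof_irrelevance|]. simpl.
    apply hom_add.
  - apply eq_sig_hprop; [intros; apply proof_irrelevance|]. simpl.
    apply hom_zero.
Defined.

(* A regular epimorphism f : X -> Y is Γ-trivial exactly when x |-> (f x, η x) maps X
   isomorphically onto the pullback of η_Y and UF f; as this map is always onto, this
   means Ker f ∩ [X,X] = 0 and x is positive as soon as f x and η x are.
   For the pullback of f along a regular epimorphism p : E -> H, the first condition kills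
   the commutator of (0,k) and (e,g), so Ker f is central; the second, applied to
   -(e,a) + (e,a'), makes -a + a' positive whenever a, a' are positive with f a = f a'.
   Conversely, these two properties make the first projection of Eq(f) trivial: centrality
   puts [Eq(f),Eq(f)] in the diagonal, and the positivity of the differences -a + a' (and
   of their conjugates a' - a) gives the reflection of positive cones.  That positivity is
   also exactly what is needed to translate the kernel {(0,k)} of Eq(f̄) -> P_G
   bijectively onto each fibre, i.e. the homogeneity in condition (1). *)

From Stdlib Require Import ClassicalEpsilon ProofIrrelevance FunctionalExtensionality PropExtensionality.
Set Implicit Arguments.
Unset Strict Implicit.

Section GroupLaws.
Variables (G : pgrp) (HG : is_pgrp G).

Lemma paddKl (x y : G) : padd (popp x) (padd x y) = y.
Proof. rewrite (ax_assoc HG), (ax_addNl HG), (ax_add0l HG); reflexivity. Qed.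

Lemma paddNKl (x y : G) : padd x (padd (popp x) y) = y.
Proof. rewrite (ax_assoc HG), (ax_addNr HG), (ax_add0l HG); reflexivity. Qed.

Lemma popp_uniq (x y : G) : padd x y = pzero -> popp x = y.
Proof. intro E. rewrite <- (ax_add0r HG (popp x)), <- E, paddKl. reflexivity. Qed.

Lemma poppK (x : G) : popp (popp x) = x.
Proof. apply popp_uniq, (ax_addNl HG). Qed.

Lemma poppD (x y : G) : popp (padd x y) = padd (popp y) (popp x).
Proof.
  apply popp_uniq. rewrite <- (ax_assoc HG), paddNKl, (ax_addNr HG). reflexivity.
Qed.

Lemma popp0 : popp (@pzero G) = pzero.
Proof. apply popp_uniq, (ax_add0l HG). Qed.

End GroupLaws.

Ltac group_simpl HG :=
  repeat first
   [ rewrite <- (ax_assoc HG)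
   | rewrite (ax_add0l HG) | rewrite (ax_add0r HG)
   | rewrite (paddKl HG) | rewrite (paddNKl HG)
   | rewrite (ax_addNr HG) | rewrite (ax_addNl HG)
   | rewrite (poppD HG) | rewrite (poppK HG) | rewrite (popp0 HG) ].

Section GroupCancellation.
Variables (G : pgrp) (HG : is_pgrp G).

Lemma psub_eq0 (x y : G) : padd x (popp y) = pzero -> x = y.
Proof.
  intro E. transitivity (padd (padd x (popp y)) y); [group_simpl HG; reflexivity|].
  rewrite E. apply (ax_add0l HG).
Qed.

Lemma padd_cancel_r (x y z : G) : padd x z = padd y z -> x = y.
Proof.
  intro E. transitivity (padd (padd x z) (popp z)); [group_simpl HG; reflexivity|].
  rewrite E. group_simpl HG. reflexivity.
Qed.

Lemma padd_cancel_l (x y z : G) : padd z x = padd z y -> x = y.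
Proof.
  intro E. transitivity (padd (popp z) (padd z x)); [group_simpl HG; reflexivity|].
  rewrite E. group_simpl HG. reflexivity.
Qed.

Lemma paddC_of_commutator0 (x y : G) :
  padd (padd (padd x y) (popp x)) (popp y) = pzero -> padd x y = padd y x.
Proof.
  intro E. transitivity (padd (padd (padd (padd x y) (popp x)) (popp y)) (padd y x));
    [group_simpl HG; reflexivity|].
  rewrite E. apply (ax_add0l HG).
Qed.

Lemma pos_sub_of_pos_opp_add (a b : G) : ppos (padd (popp a) b) -> ppos (padd b (popp a)).
Proof.
  intro Hp. replace (padd b (popp a)) with (padd (padd a (padd (popp a) b)) (popp a))
    by (group_simpl HG; reflexivity).
  apply (ax_posJ HG), Hp.
Qed.

End GroupCancellation.

Lemma hom_sub (G H : pgrp) (f : phom G H) (x y : G) :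
  f (padd x (popp y)) = padd (f x) (popp (f y)).
Proof. rewrite hom_add, hom_opp. reflexivity. Qed.

Section Abelianization.
Variables (X : pgrp) (HX : is_pgrp X).

Lemma comm_sub_eq (a b : X) : comm_sub a -> a = b -> comm_sub b.
Proof. intros Ha <-. exact Ha. Qed.

Lemma comm_sub_conj (g c : X) : comm_sub c -> comm_sub (padd g (padd c (popp g))).
Proof.
  intro Hc. apply (comm_sub_eq (cs_add (cs_comm g c) Hc)). group_simpl HX. reflexivity.
Qed.

Lemma eta_eqP (x y : X) : ab_eta x = ab_eta y <-> comm_sub (padd x (popp y)).
Proof.
  split; intro E.
  - apply (f_equal (@proj1_sig _ _)) in E. change (abcls x y). simpl in E. rewrite E.
    unfold abcls. rewrite (ax_addNr HX). constructor.
  - apply eq_sig_hprop; [intros; apply proof_irrelevance|]. simpl.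
    apply functional_extensionality. intro z. unfold abcls.
    apply propositional_extensionality. split; intro K.
    + apply (comm_sub_eq (cs_add (cs_opp E) K)). group_simpl HX. reflexivity.
    + apply (comm_sub_eq (cs_add E K)). group_simpl HX. reflexivity.
Qed.

Lemma eta_rep (c : abT X) : ab_eta (ab_rep c) = c.
Proof.
  unfold ab_rep. destruct (constructive_indefinite_description _ _) as [g Hg]. simpl.
  apply eq_sig_hprop; [intros; apply proof_irrelevance|]. symmetry; exact Hg.
Qed.

Lemma eta_add_congr (r s a b : X) :
  ab_eta r = ab_eta a -> ab_eta s = ab_eta b -> ab_eta (padd r s) = ab_eta (padd a b).
Proof.
  rewrite !eta_eqP. intros Hra Hsb.
  apply (comm_sub_eq (cs_add (comm_sub_conj r Hsb) Hra)). group_simpl HX. reflexivity.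
Qed.

Lemma eta_opp_congr (r a : X) : ab_eta r = ab_eta a -> ab_eta (popp r) = ab_eta (popp a).
Proof.
  rewrite !eta_eqP. intro Hra.
  apply (comm_sub_eq (comm_sub_conj (popp r) (cs_opp Hra))). group_simpl HX. reflexivity.
Qed.

Lemma eta_add (a b : X) : ab_add (ab_eta a) (ab_eta b) = ab_eta (padd a b).
Proof. apply eta_add_congr; apply eta_rep. Qed.

Lemma eta_opp (a : X) : ab_opp (ab_eta a) = ab_eta (popp a).
Proof. apply eta_opp_congr, eta_rep. Qed.

Lemma eta_addC (a b : X) : ab_eta (padd a b) = ab_eta (padd b a).
Proof.
  apply eta_eqP, (comm_sub_eq (cs_comm a b)). group_simpl HX. reflexivity.
Qed.

Lemma ab_posE (c : UF X) :
  ab_pos c <-> exists p q : X, ppos p /\ ppos q /\ c = ab_eta (padd p (popp q)).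
Proof.
  unfold ab_pos. split; intros [p [q [Hp [Hq E]]]]; exists p, q; repeat split; auto;
    rewrite E, eta_opp, eta_add; reflexivity.
Qed.

Lemma ab_pos_eta (x : X) : ppos x -> ab_pos (ab_eta x).
Proof.
  intro Hx. apply ab_posE. exists x, pzero. repeat split; [exact Hx| apply HX|].
  group_simpl HX. reflexivity.
Qed.

Lemma ab_posD (x y : X) :
  ab_pos (ab_eta x) -> ab_pos (ab_eta y) -> ab_pos (ab_eta (padd x y)).
Proof.
  rewrite !ab_posE. intros [p [q [Hp [Hq Ex]]]] [p' [q' [Hp' [Hq' Ey]]]].
  exists (padd p p'), (padd q q'). repeat split; try (apply HX; assumption).
  rewrite <- eta_add, Ex, Ey, !eta_add. group_simpl HX.
  apply eta_add_congr; [reflexivity|]. rewrite eta_addC. group_simpl HX. reflexivity.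
Qed.

Lemma ab_posJ (g x : X) : ab_pos (ab_eta x) -> ab_pos (ab_eta (padd (padd g x) (popp g))).
Proof. rewrite eta_addC. group_simpl HX. exact id. Qed.

Definition eta_phom : phom X (UF X) :=
  @PHom X (UF X) (@ab_eta X) (fun x y => eq_sym (eta_add x y))
    (fun x => eq_sym (eta_opp x)) eq_refl ab_pos_eta.

End Abelianization.

Section Morphisms.
Variables (X Y : pgrp) (HX : is_pgrp X) (HY : is_pgrp Y) (f : phom X Y).

Lemma hom_comm_sub (c : X) : comm_sub c -> comm_sub (f c).
Proof.
  induction 1.
  - rewrite hom_zero. constructor.
  - rewrite !hom_add, !hom_opp. constructor.
  - rewrite hom_add. constructor; assumption.
  - rewrite hom_opp. constructor; assumption.
Qed.

Lemma comm_sub_lift :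
  (forall y : Y, exists x, f x = y) -> forall c : Y, comm_sub c -> exists d, comm_sub d /\ f d = c.
Proof.
  intros Hsurj c Hc. induction Hc as [| y1 y2 | c1 c2 _ [d1 [Hd1 <-]] _ [d2 [Hd2 <-]]
                                      | c1 _ [d1 [Hd1 <-]]].
  - exists pzero. split; [constructor| apply hom_zero].
  - destruct (Hsurj y1) as [x1 <-], (Hsurj y2) as [x2 <-].
    exists (padd (padd (padd x1 x2) (popp x1)) (popp x2)). split; [constructor|].
    rewrite !hom_add, !hom_opp. reflexivity.
  - exists (padd d1 d2). split; [constructor; assumption| apply hom_add].
  - exists (popp d1). split; [constructor; assumption| apply hom_opp].
Qed.

Lemma UF_map_eta (x : X) : UF_map f (ab_eta x) = ab_eta (f x).
Proof.
  unfold UF_map. apply (eta_eqP HY). rewrite <- hom_sub.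
  apply hom_comm_sub, (eta_eqP HX), eta_rep.
Qed.

End Morphisms.

Definition phom_comp (X Y Z : pgrp) (g : phom Y Z) (f : phom X Y) : phom X Z.
Proof.
  refine (@PHom X Z (fun x => g (f x)) _ _ _ _).
  - intros x y. rewrite !hom_add. reflexivity.
  - intro x. rewrite !hom_opp. reflexivity.
  - rewrite !hom_zero. reflexivity.
  - intros x Hx. apply hom_pos, hom_pos, Hx.
Defined.

Definition zero_phom (Z W : pgrp) (HW : is_pgrp W) : phom Z W.
Proof.
  refine (@PHom Z W (fun _ => pzero) _ _ _ _); intros.
  - symmetry; apply (ax_add0l HW).
  - symmetry; apply (popp0 HW).
  - reflexivity.
  - apply (ax_pos0 HW).
Defined.

Section TrivialConeSubgroup.
Variables (X : pgrp) (HX : is_pgrp X) (S : X -> Prop) (S0 : S pzero)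
  (SD : forall x y, S x -> S y -> S (padd x y)) (SN : forall x, S x -> S (popp x)).

Definition subgrp_trivial_cone : pgrp :=
  @PGrp {x | S x} (fun a b => exist _ _ (SD (proj2_sig a) (proj2_sig b)))
    (fun a => exist _ _ (SN (proj2_sig a))) (exist _ _ S0) (fun a => proj1_sig a = pzero).

Lemma is_pgrp_subgrp_trivial_cone : is_pgrp subgrp_trivial_cone.
Proof.
  constructor; simpl; intros;
   repeat match goal with a : {x | S x} |- _ => destruct a end;
   try (apply eq_sig_hprop; [intros; apply proof_irrelevance|]); simpl in *;
   repeat match goal with E : _ = pzero |- _ => rewrite E end; group_simpl HX; reflexivity.
Qed.

Definition subgrp_incl : phom subgrp_trivial_cone X.
Proof.
  refine (@PHom subgrp_trivial_cone X (@proj1_sig _ _) _ _ _ _); try reflexivity.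
  intros a Ha. simpl in Ha. rewrite Ha. apply (ax_pos0 HX).
Defined.

End TrivialConeSubgroup.

Definition with_cone (X : pgrp) (P : X -> Prop) : pgrp := PGrp (@padd X) (@popp X) pzero P.

Lemma is_pgrp_with_cone (X : pgrp) (HX : is_pgrp X) (P : X -> Prop) :
  P pzero -> (forall x y, P x -> P y -> P (padd x y)) ->
  (forall g x, P x -> P (padd (padd g x) (popp g))) -> is_pgrp (with_cone P).
Proof. intros. constructor; simpl; try assumption; apply HX. Qed.

Definition ker_comm_trivial (X Y : pgrp) (f : phom X Y) : Prop :=
  forall x : X, f x = pzero -> ab_eta x = ab_eta pzero -> x = pzero.

Definition pos_reflecting (X Y : pgrp) (f : phom X Y) : Prop :=
  forall x : X, ppos (f x) -> ab_pos (ab_eta x) -> ppos x.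

Section TrivialExtensions.
Variables (X Y : pgrp) (HX : is_pgrp X) (HY : is_pgrp Y) (f : phom X Y).

Lemma ker_comm_trivial_inj : ker_comm_trivial f ->
  forall x x' : X, f x = f x' -> ab_eta x = ab_eta x' -> x = x'.
Proof.
  intros Hker x x' Ef Eeta. apply (psub_eq0 HX), Hker.
  - rewrite hom_sub, Ef. apply (ax_addNr HY).
  - apply (eta_eqP HX). apply (eta_eqP HX) in Eeta.
    apply (comm_sub_eq Eeta). group_simpl HX. reflexivity.
Qed.

Lemma eta_square_commutes (x : X) : ab_eta (f x) = UF_map f (ab_eta x).
Proof. symmetry; apply (UF_map_eta HX HY). Qed.

Lemma trivial_ext_ker_comm_trivial : trivial_ext f -> ker_comm_trivial f.
Proof.
  intros [_ [_ Hpb]] x Hfx Hetax.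
  set (S := fun x : X => f x = pzero /\ ab_eta x = ab_eta pzero).
  assert (S0 : S pzero) by (split; [apply hom_zero| reflexivity]).
  assert (SD : forall a b, S a -> S b -> S (padd a b)).
  { intros a b [Fa Ea] [Fb Eb]. split.
    - rewrite hom_add, Fa, Fb. apply (ax_add0l HY).
    - rewrite <- (eta_add HX), Ea, Eb, (eta_add HX), (ax_add0l HX). reflexivity. }
  assert (SN : forall a, S a -> S (popp a)).
  { intros a [Fa Ea]. split.
    - rewrite hom_opp, Fa. apply (popp0 HY).
    - rewrite <- (eta_opp HX), Ea, (eta_opp HX), (popp0 HX). reflexivity. }
  set (i := subgrp_incl HX S0 SD SN).
  destruct (Hpb _ (is_pgrp_subgrp_trivial_cone HX S0 SD SN)
              (phom_comp f i) (phom_comp (eta_phom HX) i)) as [w [_ Huniq]].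
  { intro z. apply eta_square_commutes. }
  set (z := exist S x (conj Hfx Hetax) : subgrp_trivial_cone S0 SD SN).
  assert (Ei := Huniq i (fun _ => conj eq_refl eq_refl) z).
  assert (E0 := Huniq (zero_phom _ HX)
    (fun z => conj (eq_trans (hom_zero f) (eq_sym (proj1 (proj2_sig z))))
                   (eq_sym (proj2 (proj2_sig z)))) z).
  simpl in Ei, E0. congruence.
Qed.

Lemma trivial_ext_pos_reflecting : trivial_ext f -> pos_reflecting f.
Proof.
  intro Ht. assert (Hinj := ker_comm_trivial_inj (trivial_ext_ker_comm_trivial Ht)).
  destruct Ht as [_ [_ Hpb]]. intros x Hfx Hetax.
  set (P := fun x : X => ppos (f x) /\ ab_pos (ab_eta x)).
  assert (HZ : is_pgrp (with_cone P)).
  { apply is_pgrp_with_cone; [exact HX| | |].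
    - split; [rewrite hom_zero; apply (ax_pos0 HY)| apply (ab_pos_eta HX), (ax_pos0 HX)].
    - intros a b [Fa Ea] [Fb Eb]. split; [rewrite hom_add; apply (ax_posD HY); assumption|].
      apply (ab_posD HX); assumption.
    - intros g a [Fa Ea]. split; [|apply (ab_posJ HX), Ea].
      rewrite !hom_add, hom_opp. apply (ax_posJ HY), Fa. }
  set (u := @PHom (with_cone P) Y f (hom_add f) (hom_opp f) (hom_zero f) (fun a Ha => proj1 Ha)).
  set (v := @PHom (with_cone P) (UF X) (@ab_eta X) (hom_add (eta_phom HX))
              (hom_opp (eta_phom HX)) eq_refl (fun a Ha => proj2 Ha)).
  destruct (Hpb _ HZ u v) as [w [Hw _]]; [intro z; apply eta_square_commutes|].
  destruct (Hw x) as [Wf Weta]. simpl in Wf, Weta.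
  rewrite <- (Hinj (w x) x Wf Weta). apply (hom_pos w). split; assumption.
Qed.

Lemma pullback_lift : regular_epi f -> forall (y : Y) (c : UF X),
  ab_eta y = UF_map f c -> exists x : X, f x = y /\ ab_eta x = c.
Proof.
  intros Hf y c E. set (x0 := ab_rep c).
  assert (Ex0 : ab_eta x0 = c) by apply eta_rep.
  apply (eta_eqP HY) in E. destruct (comm_sub_lift (proj1 Hf) E) as [d [Hd Ed]].
  exists (padd d x0). split.
  - rewrite hom_add, Ed. group_simpl HY. reflexivity.
  - rewrite <- Ex0. apply (eta_eqP HX), (comm_sub_eq Hd). group_simpl HX. reflexivity.
Qed.

Lemma trivial_ext_of : regular_epi f -> ker_comm_trivial f -> pos_reflecting f -> trivial_ext f.
Proof.
  intros Hf Hker Hpos. split; [exact Hf|]. split; [exact eta_square_commutes|].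
  intros Z HZ u v Huv.
  assert (Hinj := ker_comm_trivial_inj Hker).
  destruct (choice (fun z x => f x = u z /\ ab_eta x = v z)) as [w Hw].
  { intro z. apply (pullback_lift Hf), Huv. }
  assert (Hwf : forall z, f (w z) = u z) by (intro z; apply Hw).
  assert (Hweta : forall z, ab_eta (w z) = v z) by (intro z; apply Hw).
  unshelve eexists (@PHom Z X w _ _ _ _).
  - intros z z'. apply Hinj.
    + rewrite hom_add, !Hwf. apply hom_add.
    + rewrite <- (eta_add HX), !Hweta. apply (hom_add v).
  - intro z. apply Hinj.
    + rewrite hom_opp, !Hwf. apply hom_opp.
    + rewrite <- (eta_opp HX), !Hweta. apply (hom_opp v).
  - apply Hinj.
    + rewrite hom_zero, Hwf. apply hom_zero.
    + rewrite Hweta. apply (hom_zero v).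
  - intros z Hz. apply Hpos; [rewrite Hwf; apply (hom_pos u)| rewrite Hweta; apply (hom_pos v)];
      exact Hz.
  - split; [exact Hw|]. intros w' Hw' z. simpl.
    apply Hinj; [rewrite Hwf| rewrite Hweta]; apply Hw'.
Qed.

Lemma trivial_extP :
  trivial_ext f <-> regular_epi f /\ ker_comm_trivial f /\ pos_reflecting f.
Proof.
  split.
  - intro Ht. split; [exact (proj1 Ht)|].
    split; [apply trivial_ext_ker_comm_trivial | apply trivial_ext_pos_reflecting]; exact Ht.
  - intros [Hf [Hker Hpos]]. apply trivial_ext_of; assumption.
Qed.

End TrivialExtensions.

Lemma is_pgrp_PB (E X Y : pgrp) (HE : is_pgrp E) (HX : is_pgrp X) (p : phom E Y) (f : phom X Y) :
  is_pgrp (PB p f).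
Proof.
  constructor; simpl; intros;
   repeat match goal with q : pbT _ _ |- _ => destruct q as [[? ?] ?] end;
   try (apply eq_sig_hprop; [intros; apply proof_irrelevance|]); simpl;
   unfold pb_pos in *; simpl in *;
   repeat match goal with H : _ /\ _ |- _ => destruct H end.
  1-5: f_equal; first [group_simpl HE; reflexivity | group_simpl HX; reflexivity].
  - split; [apply (ax_pos0 HE)| apply (ax_pos0 HX)].
  - split; [apply (ax_posD HE)| apply (ax_posD HX)]; assumption.
  - split; [apply (ax_posJ HE)| apply (ax_posJ HX)]; assumption.
Qed.

Lemma pb_eq (E X Y : pgrp) (p : phom E Y) (f : phom X Y) (q q' : PB p f) :
  proj1_sig q = proj1_sig q' -> q = q'.
Proof. apply eq_sig_hprop. intros; apply proof_irrelevance. Qed.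

Definition ker_central (G H : pgrp) (f : phom G H) : Prop :=
  forall k : G, f k = pzero -> forall g : G, padd k g = padd g k.

Definition pos_fibre_diff (G H : pgrp) (f : phom G H) : Prop :=
  forall a a' : G, ppos a -> ppos a' -> f a = f a' -> ppos (padd (popp a) a').

Section CentralExtensions.
Variables (E G H : pgrp) (HE : is_pgrp E) (HG : is_pgrp G)
  (p : phom E H) (f : phom G H) (Hp : regular_epi p) (Ht : trivial_ext (pb_proj1 p f)).

Let HPB : is_pgrp (PB p f) := is_pgrp_PB HE HG p f.

Lemma pullback_trivial_ker_central : ker_central f.
Proof.
  intros k Hk g. destruct (proj1 Hp (f g)) as [e He].
  assert (H0k : p pzero = f k) by (rewrite hom_zero, Hk; reflexivity).
  set (z1 := exist _ (pzero, k) H0k : PB p f).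
  set (z2 := exist _ (e, g) He : PB p f).
  assert (Hc := proj1 (proj2 (proj1 (trivial_extP HPB HE _) Ht))
                  (padd (padd (padd z1 z2) (popp z1)) (popp z2))).
  apply (f_equal (fun q : PB p f => snd (proj1_sig q))) in Hc.
  - apply (paddC_of_commutator0 HG), Hc.
  - simpl. group_simpl HE. reflexivity.
  - apply (eta_eqP HPB), (comm_sub_eq (cs_comm z1 z2)). group_simpl HPB. reflexivity.
Qed.

Lemma pullback_trivial_pos_fibre_diff : pos_fibre_diff f.
Proof.
  intros a a' Ha Ha' Eaa'.
  destruct (proj2 Hp (f a) (hom_pos f Ha)) as [e [He Ea]].
  assert (Ea' : p e = f a') by (rewrite Ea; exact Eaa').
  set (z := exist _ (e, a) Ea : PB p f).
  set (z' := exist _ (e, a') Ea' : PB p f).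
  apply (proj2 (proj2 (proj1 (trivial_extP HPB HE _) Ht)) (padd (popp z) z')).
  - simpl. rewrite (ax_addNl HE). apply (ax_pos0 HE).
  - apply (ab_posE HPB). exists z', z. repeat split; try assumption.
    apply (eta_addC HPB).
Qed.

End CentralExtensions.

Section KernelPair.
Variables (G H : pgrp) (HG : is_pgrp G) (HH : is_pgrp H) (f : phom G H) (Hk : ker_central f).

Lemma ker_central_conj (a a' g : G) : f a = f a' ->
  padd a' (padd g (popp a')) = padd a (padd g (popp a)).
Proof.
  intro Eaa'. set (k := padd (popp a) a').
  assert (Hkc : forall h, padd k h = padd h k).
  { apply Hk. unfold k. rewrite hom_add, hom_opp, Eaa'. apply (ax_addNl HH). }
  assert (Ea' : a' = padd a k) by (unfold k; group_simpl HG; reflexivity).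
  clearbody k. subst a'. group_simpl HG.
  rewrite (Hkc (padd g (padd (popp k) (popp a)))). group_simpl HG.
  rewrite <- (Hkc (popp a)). group_simpl HG. reflexivity.
Qed.

(* Both components of a commutator in [Eq(f)] agree, since conjugation by [x] and by [x']
   coincide whenever [f x = f x']. *)
Lemma kernel_pair_comm_sub_diag (c : kernel_pair f) :
  comm_sub c -> fst (proj1_sig c) = snd (proj1_sig c).
Proof.
  induction 1 as [| [[a a'] Ha] [[b b'] Hb] | c1 c2 _ IH1 _ IH2 | c1 _ IH]; simpl in *.
  - reflexivity.
  - transitivity (padd (padd a (padd b (popp a))) (popp b)); [group_simpl HG; reflexivity|].
    rewrite <- (ker_central_conj b Ha). group_simpl HG.
    rewrite <- (ker_central_conj (popp a') Hb). group_simpl HG. reflexivity.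
  - rewrite IH1, IH2. reflexivity.
  - rewrite IH. reflexivity.
Qed.

Let HKP : is_pgrp (kernel_pair f) := is_pgrp_PB HG HG f f.

Definition kp_diag (x : G) : kernel_pair f := exist _ (x, x) eq_refl.

Lemma kernel_pair_ker_comm_trivial : ker_comm_trivial (kp_proj1 f).
Proof.
  intros [[x x'] hx] Hx Heta. simpl in Hx. subst x. apply pb_eq. simpl.
  apply (eta_eqP HKP), kernel_pair_comm_sub_diag in Heta. simpl in Heta.
  f_equal. transitivity (padd x' (popp pzero)); [group_simpl HG; reflexivity|].
  rewrite <- Heta. apply (ax_addNr HG).
Qed.

Lemma kernel_pair_pos_reflecting : pos_fibre_diff f -> pos_reflecting (kp_proj1 f).
Proof.
  intros Hpos [[x x'] hx] Hx Heta. split; [exact Hx|]. simpl in Hx |- *.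
  apply (ab_posE HKP) in Heta.
  destruct Heta as [[[p1 p2] hp] [[[r1 r2] hr] [[Hp1 Hp2] [[Hr1 Hr2] Heta]]]].
  unfold pb_pos in *; simpl in *.
  apply (eta_eqP HKP), kernel_pair_comm_sub_diag in Heta. simpl in Heta.
  set (m := padd (popp p1) p2).
  assert (Hm : forall g, padd m g = padd g m).
  { apply Hk. unfold m. rewrite hom_add, hom_opp, hp. apply (ax_addNl HH). }
  assert (Ex' : x' = padd x (padd m (padd r1 (popp r2)))).
  { transitivity (padd (padd x' (popp (padd p2 (popp r2)))) (padd p2 (popp r2)));
      [group_simpl HG; reflexivity|].
    rewrite <- Heta, (ax_assoc HG m), Hm. unfold m. group_simpl HG. reflexivity. }
  rewrite Ex'. apply (ax_posD HG); [exact Hx|]. apply (ax_posD HG).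
  - exact (Hpos p1 p2 Hp1 Hp2 hp).
  - exact (pos_sub_of_pos_opp_add HG (Hpos r2 r1 Hr2 Hr1 (eq_sym hr))).
Qed.

Lemma kernel_pair_trivial : pos_fibre_diff f -> trivial_ext (kp_proj1 f).
Proof.
  intro Hpos. apply (trivial_extP HKP HG). split; [split|split].
  - intro x. exists (kp_diag x). reflexivity.
  - intros x Hx. exists (kp_diag x). split; [split|]; trivial.
  - exact kernel_pair_ker_comm_trivial.
  - exact (kernel_pair_pos_reflecting Hpos).
Qed.

End KernelPair.

Section ConeKernelPair.
Variables (G H : pgrp) (HG : is_pgrp G) (HH : is_pgrp H) (f : phom G H).

Local Notation F := (cone_hom HG HH f).

Lemma cone_eq (X : pgrp) (HX : is_pgrp X) (x y : cone HX) : proj1_sig x = proj1_sig y -> x = y.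
Proof. apply eq_sig_hprop. intros; apply proof_irrelevance. Qed.

Lemma eqm_ext (q q' : EqM F) :
  proj1_sig (fst (proj1_sig q)) = proj1_sig (fst (proj1_sig q')) ->
  proj1_sig (snd (proj1_sig q)) = proj1_sig (snd (proj1_sig q')) -> q = q'.
Proof.
  intros E1 E2. apply eq_sig_hprop; [intros; apply proof_irrelevance|].
  apply injective_projections; apply cone_eq; assumption.
Qed.

Lemma eqm_fibre (q : EqM F) : f (proj1_sig (fst (proj1_sig q))) = f (proj1_sig (snd (proj1_sig q))).
Proof. exact (f_equal (@proj1_sig _ _) (proj2_sig q)). Qed.

Definition cone_pair (a b : G) (Ha : ppos a) (Hb : ppos b) (E : f a = f b) : EqM F :=
  exist _ (exist _ a Ha, exist _ b Hb) (cone_eq (x := F (exist _ a Ha)) (y := F (exist _ b Hb)) E).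

Lemma kernel_pair_cone_bij_r (y : cone HG) : pos_fibre_diff f ->
  set_bij (fun x => eqm_pi1 F x = munit) (fun x => eqm_pi1 F x = y)
    (fun x => mop x (eqm_diag F y)).
Proof.
  intro Hpos. destruct y as [a Ha]. split; [|split].
  - intros [[x1 x2] hx] Ax. apply (f_equal (@proj1_sig _ _)) in Ax. simpl in Ax.
    apply cone_eq. simpl. rewrite Ax. apply (ax_add0l HG).
  - intros [[x1 [x2 h2]] hx] [[y1 [y2 k2]] hy] Ax Ay E.
    apply (f_equal (@proj1_sig _ _)) in Ax, Ay.
    apply (f_equal (fun q : EqM F => proj1_sig (snd (proj1_sig q)))) in E.
    simpl in *. apply eqm_ext; simpl.
    + congruence.
    + exact (padd_cancel_r HG E).
  - intros [[b1 [b2 Hb2]] hb] Bb. apply (f_equal (@proj1_sig _ _)) in Bb.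
    assert (Efb := eqm_fibre (exist _ (b1, exist _ b2 Hb2) hb)). simpl in Bb, Efb.
    rewrite Bb in Efb.
    assert (E0 : f pzero = f (padd b2 (popp a))).
    { rewrite hom_zero, hom_sub, Efb. symmetry; apply (ax_addNr HH). }
    exists (cone_pair (ax_pos0 HG) (pos_sub_of_pos_opp_add HG (Hpos a b2 Ha Hb2 Efb)) E0).
    split; [reflexivity|]. apply eqm_ext; simpl; rewrite ?Bb; group_simpl HG; reflexivity.
Qed.

Lemma kernel_pair_cone_bij_l (y : cone HG) : pos_fibre_diff f ->
  set_bij (fun x => eqm_pi1 F x = munit) (fun x => eqm_pi1 F x = y)
    (fun x => mop (eqm_diag F y) x).
Proof.
  intro Hpos. destruct y as [a Ha]. split; [|split].
  - intros [[x1 x2] hx] Ax. apply (f_equal (@proj1_sig _ _)) in Ax. simpl in Ax.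
    apply cone_eq. simpl. rewrite Ax. apply (ax_add0r HG).
  - intros [[x1 [x2 h2]] hx] [[y1 [y2 k2]] hy] Ax Ay E.
    apply (f_equal (@proj1_sig _ _)) in Ax, Ay.
    apply (f_equal (fun q : EqM F => proj1_sig (snd (proj1_sig q)))) in E.
    simpl in *. apply eqm_ext; simpl.
    + congruence.
    + exact (padd_cancel_l HG E).
  - intros [[b1 [b2 Hb2]] hb] Bb. apply (f_equal (@proj1_sig _ _)) in Bb.
    assert (Efb := eqm_fibre (exist _ (b1, exist _ b2 Hb2) hb)). simpl in Bb, Efb.
    rewrite Bb in Efb.
    assert (E0 : f pzero = f (padd (popp a) b2)).
    { rewrite hom_zero, hom_add, hom_opp, Efb. symmetry; apply (ax_addNl HH). }
    exists (cone_pair (ax_pos0 HG) (Hpos a b2 Ha Hb2 Efb) E0).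
    split; [reflexivity|]. apply eqm_ext; simpl; rewrite ?Bb; group_simpl HG; reflexivity.
Qed.

Lemma special_homogeneous_surjection_pos_fibre_diff :
  special_homogeneous_surjection F -> pos_fibre_diff f.
Proof.
  intros [_ [_ Hhom]] a a' Ha Ha' Eaa'.
  destruct (proj2 (proj2 (proj2 (Hhom (exist _ a Ha))))
              (cone_pair Ha Ha' Eaa') eq_refl) as [[[x1 [x2 h2]] hx] [_ Ex]].
  apply (f_equal (fun q : EqM F => proj1_sig (snd (proj1_sig q)))) in Ex. simpl in Ex.
  rewrite <- Ex. group_simpl HG. exact h2.
Qed.

Lemma special_homogeneous_surjection_coneP : regular_epi f ->
  special_homogeneous_surjection F <-> pos_fibre_diff f.
Proof.
  intro Hf. split; [exact special_homogeneous_surjection_pos_fibre_diff|].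
  intro Hpos. split; [|split; [reflexivity|]].
  - intros [y Hy]. destruct (proj2 Hf y Hy) as [x [Hx Ex]].
    exists (exist _ x Hx). apply cone_eq, Ex.
  - intro y. split; [apply kernel_pair_cone_bij_r | apply kernel_pair_cone_bij_l]; exact Hpos.
Qed.

End ConeKernelPair.

Lemma normal_ext_central_ext (G H : pgrp) (HG : is_pgrp G) (f : phom G H) :
  regular_epi f -> normal_ext f -> central_ext f.
Proof. intros Hf [_ Ht]. split; [exact Hf|]. exists G, f. split; [exact HG| split; assumption]. Qed.

Lemma central_ext_conditions (G H : pgrp) (HG : is_pgrp G) (f : phom G H) :
  central_ext f -> ker_central f /\ pos_fibre_diff f.
Proof.
  intros [_ [E [p [HE [Hp Ht]]]]]. split.
  - exact (pullback_trivial_ker_central HE HG Hp Ht).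
  - exact (pullback_trivial_pos_fibre_diff HE HG Hp Ht).
Qed.

Lemma normal_ext_of_conditions (G H : pgrp) (HG : is_pgrp G) (HH : is_pgrp H) (f : phom G H) :
  regular_epi f -> ker_central f -> pos_fibre_diff f -> normal_ext f.
Proof. intros Hf Hk Hpos. split; [exact Hf| exact (kernel_pair_trivial HG HH Hk Hpos)]. Qed.

Theorem theorem6p3 (G H : pgrp) (HG : is_pgrp G) (HH : is_pgrp H)
  (f : phom G H) (Hf : regular_epi f) :
  ((forall k : G, f k = pzero -> forall g : G, padd k g = padd g k) /\
   special_homogeneous_surjection (cone_hom HG HH f)
   <-> normal_ext f) /\
  (normal_ext f <-> central_ext f).
Proof.
  pose proof (special_homogeneous_surjection_coneP HG HH Hf) as Hshs.
  assert (Hcn : central_ext f -> normal_ext f).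
  { intro Hc. destruct (central_ext_conditions HG Hc) as [Hk Hpos].
    exact (normal_ext_of_conditions HG HH Hf Hk Hpos). }
  pose proof (normal_ext_central_ext HG Hf) as Hnc.
  split; [split | split; assumption].
  - intros [Hk Hs]. exact (normal_ext_of_conditions HG HH Hf Hk (proj1 Hshs Hs)).
  - intro Hn. destruct (central_ext_conditions HG (Hnc Hn)) as [Hk Hpos].
    split; [exact Hk| exact (proj2 Hshs Hpos)].
Qed.
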